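(* Let $0<r'<r<1$. The map of condensed abelian groups $\theta_{r'}:\mathbb{Z}((T))_r\to\underline{\mathbb{R}}$, $\sum a_nT^n\mapsto\big(s\mapsto\sum a_n(s)(r')^n\big)$, is an epimorphism; i.e. for every extremally disconnected set $S$ the map $\mathbb{Z}((T))_r(S)\to C(S,\mathbb{R})$ is surjective.
   Context: Extremally disconnected sets are the projective objects in the category of compact Hausdorff spaces. For $0<r<1$ and extremally disconnected $S$, $\mathbb{Z}((T))_r(S)$ is the ring of formal sums $\sum_{n\ge k}a_nT^n$ (some $k\in\mathbb{Z}$) with $a_n\in C(S,\mathbb{Z})$ such that there is $c>0$ with $\sum_n|a_n(s)|r^n\le c$ for all $s\in S$; this defines a condensed ring $\mathbb{Z}((T))_r$. $\underline{\mathbb{R}}$ is $S\mapsto C(S,\mathbb{R})$. *)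

From HB Require Import structures.
From mathcomp Require Import all_boot all_order all_algebra.
From mathcomp Require Import all_classical all_reals all_analysis.
Set Implicit Arguments. Unset Strict Implicit. Unset Printing Implicit Defensive.
Import Order.TTheory GRing.Theory Num.Theory.
Import numFieldNormedType.Exports.
Local Open Scope classical_set_scope.
Local Open Scope ring_scope.

Definition extremally_disconnected (S : topologicalType) : Prop :=
  forall U : set S, open U -> open (closure U).

(* Continuous maps S -> Z (Z discrete) = locally constant maps. *)
Definition locally_constant (S : topologicalType) (f : S -> int) : Prop :=
  forall s : S, \forall t \near s, f t = f s.

Definition win_sum (R : realType) (b : int -> R) (x : R) (N : nat) : R :=
  \sum_(i < (N + N)%N) b ((i : nat)%:Z - N%:Z) * x ^ ((i : nat)%:Z - N%:Z).

(* a : int -> C(S,Z) is an element of Z((T))_r(S):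
   coefficients locally constant, bounded below support, and
   sum_n |a_n(s)| r^n <= c for all s (nonneg. terms: bounded partial sums). *)
Definition ZLaurent_r (R : realType) (r : R) (S : topologicalType)
    (a : int -> S -> int) : Prop :=
  (forall n, locally_constant (a n)) /\
  (exists k : int, forall n : int, n < k -> forall s, a n s = 0) /\
  (exists c : R, forall (s : S) (N : nat),
      win_sum (fun n => `|(a n s)%:~R|) r N <= c).

(* Expand f in base 1/r' with locally constant integer digits.  For a
   continuous g with |g| <= M, the integer-valued function
     k(g)(s) = #{ j < 2M : s in closure [g > j - M] } - M
   is within 1 of g, and it is locally constant because in an extremally
   disconnected space the closure of an open set is clopen.  Iterating
   g_0 = f, g_(n+1) = (g_n - k(g_n)) / r' keeps |g_n| <= M as soon as
   1/r' <= M, so the digits a_n = k(g_n) are bounded by M + 1 and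
   f - sum_(n < N) a_n r'^n = r'^N g_N tends to 0.  Bounded digits give
   sum_n |a_n| r^n <= (M + 1) / (1 - r). *)
From HB Require Import structures.
From mathcomp Require Import all_boot all_order all_algebra.
From mathcomp Require Import all_classical all_reals all_analysis.
From mathcomp Require Import ring lra.
Set Implicit Arguments. Unset Strict Implicit. Unset Printing Implicit Defensive.
Import Order.TTheory GRing.Theory Num.Theory.
Import numFieldNormedType.Exports.
Local Open Scope classical_set_scope.
Local Open Scope ring_scope.

Section LocallyConstant.
Variable S : topologicalType.

Lemma locally_constant_sum n (F : 'I_n -> S -> int) :
  (forall j, locally_constant (F j)) ->
  locally_constant (fun s => \sum_(j < n) F j s).
Proof.
move=> F_lc s; have : \forall t \near s, forall j, F j t = F j s.
  by apply: filter_forall => j; exact: F_lc.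
by apply: filterS => t Ft; apply: eq_bigr => j _; exact: Ft.
Qed.

Lemma locally_constant_indic (V : set S) :
  clopen V -> locally_constant (\1_V : S -> int).
Proof.
move=> [oV cV] s.
have [Vs|nVs] := pselect (V s).
  have : nbhs s V by apply: open_nbhs_nbhs.
  by apply: filterS => t Vt; rewrite !indicE !mem_set.
have : nbhs s (~` V) by apply: open_nbhs_nbhs; split=> //; exact: closed_openC.
by apply: filterS => t nVt; rewrite !indicE !memNset.
Qed.

Lemma continuous_locally_constant (R : numFieldType) (a : S -> int) :
  locally_constant a -> continuous (fun s => (a s)%:~R : R).
Proof. by move=> a_lc s; apply: cvg_near_cst; apply: filterS (a_lc s) => t ->. Qed.

End LocallyConstant.

Lemma sum_threshold_indicators (R : realFieldType) (I : nat -> R) (y : R) L :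
  (forall j, I j = 0 \/ I j = 1) ->
  (forall j, j%:R < y -> I j = 1) -> (forall j, y < j%:R -> I j = 0) ->
  0 <= y <= L%:R -> `|\sum_(j < L) I j - y| <= 1.
Proof.
move=> I01 I1 I0 /andP[y_ge0 y_leL].
have : [/\ \sum_(j < L) I j <= L%:R, \sum_(j < L) I j <= y + 1 &
           L%:R <= \sum_(j < L) I j \/ y - 1 <= \sum_(j < L) I j].
  elim: {y_leL}L => [|L [le_L le_y ge]]; first by rewrite big_ord0; split; lra.
  rewrite big_ord_recr /= -natr1; have [y_le_L|L_lt_y] := lerP y L%:R.
  - have IL := I01 L; split; [lra| |right].
    + by have [/I0 ->|] := ltrP y L%:R; [lra|case: IL => ->; lra].
    + by case: ge; case: IL; lra.
  - by rewrite (I1 L) //; split; [lra|lra|case: ge; [left|right]; lra].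
by case=> _ le_y [ge|ge]; rewrite ler_norml; apply/andP; split; lra.
Qed.

Section IntegerApproximation.
Variables (R : realType) (S : topologicalType) (M : nat).

Definition superlevel (g : S -> R) (c : R) : set S := [set t | c < g t].

Definition int_approx (g : S -> R) (s : S) : int :=
  \sum_(j < M + M) \1_(closure (superlevel g (j%:R - M%:R))) s - M%:Z.

Lemma closure_superlevel (g : S -> R) (c : R) :
  continuous g -> closure (superlevel g c) `<=` [set t | c <= g t].
Proof.
move=> g_cont; have ge_closed : closed (g @^-1` [set y | c <= y]).
  by apply: preimage_closed; [move=> t _; exact: g_cont|exact: closed_ge].
rewrite [X in _ `<=` X](closure_id _).1 //.
by apply: closureS => t /ltW.
Qed.

Lemma int_approx_locally_constant (g : S -> R) :
  extremally_disconnected S -> continuous g -> locally_constant (int_approx g).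
Proof.
move=> ED g_cont s.
have : locally_constant (fun s => \sum_(j < M + M)
    (\1_(closure (superlevel g (j%:R - M%:R))) s : int)).
  apply: locally_constant_sum => j; apply: locally_constant_indic.
  split; last exact: closed_closure.
  apply/ED/(@open_comp _ _ g [set y | _ < y]); last exact: open_gt.
  by move=> t _; exact: g_cont.
by move=> /(_ s); apply: filterS => t; rewrite /int_approx => ->.
Qed.

Lemma int_approx_error (g : S -> R) (s : S) :
  continuous g -> `|g s| <= M%:R -> `|g s - (int_approx g s)%:~R| <= 1.
Proof.
move=> g_cont g_le_M.
pose I j : R := (\1_(closure (superlevel g (j%:R - M%:R))) s : int)%:~R.
have -> : (int_approx g s)%:~R = \sum_(j < M + M) I j - M%:R.
  by rewrite /int_approx rmorphB rmorph_sum.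
rewrite distrC -addrA -opprD (addrC M%:R).
apply: sum_threshold_indicators => [j|j|j|].
- by rewrite /I indicE; case: (_ \in _); [right|left].
- move=> lt_j; rewrite /I indicE mem_set //.
  by apply: subset_closure; rewrite /superlevel /=; lra.
- move=> gt_j; rewrite /I indicE memNset // => /closure_superlevel.
  by move=> /(_ g_cont) /=; lra.
- by move: g_le_M; rewrite ler_norml natrD; lra.
Qed.

End IntegerApproximation.

Section DigitExpansion.
Variables (R : realType) (S : topologicalType) (M : nat) (x : R) (f : S -> R).

Fixpoint digit_rest n : S -> R :=
  if n is n'.+1 then
    fun s => (digit_rest n' s - (int_approx M (digit_rest n') s)%:~R) / x
  else f.

Definition digit n : S -> int := int_approx M (digit_rest n).

Lemma digit_partial_sum N s : x != 0 ->
  \sum_(j < N) (digit j s)%:~R * x ^+ j = f s - x ^+ N * digit_rest N s.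
Proof.
move=> x_neq0; elim: N => [|N IH]; first by rewrite big_ord0 expr0 mul1r subrr.
by rewrite big_ord_recr /= IH exprS /digit; field.
Qed.

Hypotheses (ED : extremally_disconnected S) (f_cont : continuous f).

Lemma continuous_digit_rest n : continuous (digit_rest n).
Proof.
elim: n => [|n IH] //= s.
have approx_cont := continuous_locally_constant (R := R)
  (int_approx_locally_constant M ED IH).
exact: continuousM (continuousB (IH s) (approx_cont s))
  (@cst_continuous S R x^-1 s).
Qed.

Lemma locally_constant_digit n : locally_constant (digit n).
Proof. exact/int_approx_locally_constant/continuous_digit_rest. Qed.

Hypotheses (x_gt0 : 0 < x) (invx_le_M : x^-1 <= M%:R)
  (f_le_M : forall s, `|f s| <= M%:R).

Lemma digit_rest_le n s : `|digit_rest n s| <= M%:R.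
Proof.
elim: n s => [|n IH] s //=; rewrite normrM normfV (gtr0_norm x_gt0).
apply: le_trans invx_le_M; rewrite ler_pdivrMr // mulVf ?gt_eqF //.
exact/int_approx_error/IH/continuous_digit_rest.
Qed.

Lemma digit_le n s : `|(digit n s)%:~R| <= M%:R + 1 :> R.
Proof.
have := int_approx_error (continuous_digit_rest (n := n)) (digit_rest_le n s).
move: (digit_rest_le n s); rewrite /digit !ler_norml.
by move=> /andP[rest_ge rest_le] /andP[err_ge err_le]; lra.
Qed.

Lemma cvg_digit_expansion s : x < 1 ->
  \sum_(j < N) (digit j s)%:~R * x ^+ j @[N --> \oo] --> f s.
Proof.
move=> x_lt1.
rewrite (_ : (fun N => _) = fun N => f s - x ^+ N * digit_rest N s); last first.
  by apply: funext => N; rewrite digit_partial_sum // gt_eqF.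
rewrite -[X in _ --> X]subr0; apply: cvgB; first exact: cvg_cst.
apply/norm_cvg0P; apply: (@squeeze_cvgr _ _ _ _ (cst 0) (geometric M%:R x)).
- near=> N; rewrite normr_ge0 normrM normrX gtr0_norm //= mulrC.
  apply: ler_wpM2r; [exact/exprn_ge0/ltW|exact: digit_rest_le].
- exact: cvg_cst.
- by apply: cvg_geometric; rewrite gtr0_norm.
Unshelve. all: by end_near.
Qed.

End DigitExpansion.

Lemma win_sum_nat (R : realType) (b : int -> R) (x : R) N :
  (forall z : int, z < 0 -> b z = 0) ->
  win_sum b x N = \sum_(j < N) b j * x ^+ j.
Proof.
move=> b_neg; rewrite /win_sum big_split_ord /= big1 ?add0r => [|i _]; last first.
  by rewrite b_neg ?mul0r // subr_lt0 ltz_nat.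
by apply: eq_bigr => j _; rewrite PoszD addrAC subrr add0r exprnP.
Qed.

Definition nat_coef (S : Type) (d : nat -> S -> int) (z : int) (s : S) : int :=
  if z is Posz n then d n s else 0.

Lemma nat_coef_neg (S : Type) (d : nat -> S -> int) z s :
  z < 0 -> nat_coef d z s = 0.
Proof. by case: z. Qed.

Lemma ZLaurent_r_nat_coef (R : realType) (r : R) (S : topologicalType)
    (d : nat -> S -> int) (C : R) :
  0 < r < 1 -> (forall n, locally_constant (d n)) ->
  (forall n s, `|(d n s)%:~R| <= C) -> ZLaurent_r r (nat_coef d).
Proof.
move=> /andP[r_gt0 r_lt1] d_lc d_le; split; [|split].
- by case=> [n|n] s; [exact: d_lc|apply: nearW].
- by exists 0 => z z_lt0 s; exact: nat_coef_neg.
- exists (C / (1 - r)) => s N.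
  rewrite win_sum_nat => [|z z_lt0]; last by rewrite nat_coef_neg ?normr0.
  have C_ge0 : 0 <= C := le_trans (normr_ge0 _) (d_le 0%N s).
  apply: le_trans (geometric_le_lim N C_ge0 r_gt0 _); last by rewrite gtr0_norm.
  rewrite seriesEord; apply: ler_sum => j _.
  by apply: ler_wpM2r; [exact/exprn_ge0/ltW|exact: d_le].
Qed.

Lemma continuous_compact_nat_bound (R : realType) (S : topologicalType)
    (f : S -> R) (B : R) :
  compact [set: S] -> continuous f ->
  exists M : nat, B <= M%:R /\ forall s, `|f s| <= M%:R.
Proof.
move=> S_compact f_cont.
have [A [A_real f_le_A]] : bounded_set (f @` setT).
  exact/compact_bounded/continuous_compact/S_compact/continuous_subspaceT.
have /f_le_A f_le : `|A| + 1 > A by have := real_ler_norm A_real; lra.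
pose M := Num.Def.archi_bound (`|A| + 1 + `|B|).
have lt_M : `|A| + 1 + `|B| < M%:R.
  by apply: archi_boundP; rewrite addr_ge0 ?addr_ge0.
have [A_ge0 B_ge0] := (normr_ge0 A, normr_ge0 B).
exists M; split=> [|s]; first by have := ler_norm B; lra.
by have /= := f_le _ (imageT f s); lra.
Qed.

(* Bounded digits make [r < 1] enough for the [r]-norm bound, so [r' < r] only
   serves to give [r' < 1]. *)
Theorem mainTheorem16 (R : realType) (r r' : R)
  (hr' : 0 < r') (hr'r : r' < r) (hr1 : r < 1)
  (S : topologicalType) (hcpt : compact [set: S]) (hS : hausdorff_space S)
  (hED : extremally_disconnected S)
  (f : S -> R) (hf : continuous f) :
  exists a : int -> S -> int, ZLaurent_r r a /\
    forall s : S, win_sum (fun n => (a n s)%:~R) r' N @[N --> \oo] --> f s.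
Proof.
have [M [inv_r'_le_M f_le_M]] := continuous_compact_nat_bound r'^-1 hcpt hf.
exists (nat_coef (digit M r' f)); split.
  apply: (ZLaurent_r_nat_coef (C := M%:R + 1)).
  - by apply/andP; split; lra.
  - exact: locally_constant_digit.
  - exact: digit_le.
move=> s; rewrite (_ : (fun N => _) = fun N =>
    \sum_(j < N) (digit M r' f j s)%:~R * r' ^+ j); last first.
  by apply: funext => N; rewrite win_sum_nat // => z z_lt0; rewrite nat_coef_neg.
by apply: cvg_digit_expansion => //; lra.
Qed.
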